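(* Let $n\ge1$, let $\mathcal{Q}\subseteq H^2(\mathbb{T}^n)$ be a quotient module and $\theta_{\mathcal{Q}}=P_{\mathcal{Q}}1$. If $\theta_{\mathcal{Q}}\in H^\infty(\mathbb{D}^n)$, then $S_{\theta_{\mathcal{Q}}}=P_{\mathcal{Q}}T_{\theta_{\mathcal{Q}}}|_{\mathcal{Q}}=I_{\mathcal{Q}}$.
   Context: $H^2(\mathbb{T}^n)$ is the Hardy space of the polydisc $\mathbb{D}^n$; $T_\varphi f=\varphi f$ for $\varphi\in H^\infty(\mathbb{D}^n)$, $T_{z_i}$ multiplication by $z_i$. A closed subspace $\mathcal{Q}$ is a quotient module if $T_{z_i}^*\mathcal{Q}\subseteq\mathcal{Q}$ for all $i$; $P_{\mathcal{Q}}$ is the orthogonal projection onto $\mathcal{Q}$. *)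

From mathcomp Require Import all_boot all_algebra all_classical all_reals all_analysis complex.
Import GRing.Theory Num.Theory numFieldNormedType.Exports.
Set Implicit Arguments. Unset Strict Implicit. Unset Printing Implicit Defensive.
Local Open Scope classical_set_scope.
Local Open Scope ring_scope.

(* Elements of H^2(T^n) are represented by their Taylor coefficient families
   f : {ffun 'I_n -> nat} -> R[i]  (f a = coefficient of z^a), subject to
   square summability (inH2). *)
Definition mi (n : nat) := {ffun 'I_n -> nat}.

Section Hardy.
Variables (R : realType) (n : nat).
Local Notation C := (R[i]).
Local Notation ser := (mi n -> C).

Definition sqmod (z : C) : R := complex.Re z ^+ 2 + complex.Im z ^+ 2.

Definition mi_of (N : nat) (a : {ffun 'I_n -> 'I_N}) : mi n :=
  [ffun i => nat_of_ord (a i)].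

Definition bsum (N : nat) (F : mi n -> C) : C :=
  \sum_(a : {ffun 'I_n -> 'I_N}) F (mi_of a).
Definition bsumR (N : nat) (F : mi n -> R) : R :=
  \sum_(a : {ffun 'I_n -> 'I_N}) F (mi_of a).

Definition cvgC (u : nat -> C) (l : C) : Prop :=
  ((fun k => complex.Re (u k)) @ \oo --> complex.Re l) /\
  ((fun k => complex.Im (u k)) @ \oo --> complex.Im l).

Definition inH2 (f : ser) : Prop :=
  exists M : R, forall N, bsumR N (fun a => sqmod (f a)) <= M.

Definition inner (f g : ser) (c : C) : Prop :=
  cvgC (fun N => bsum N (fun a => f a * conjc (g a))) c.

Definition cvgH2 (u : nat -> ser) (f : ser) : Prop :=
  forall e : R, 0 < e -> exists K : nat, forall k, (K <= k)%N ->
    forall N, bsumR N (fun a => sqmod (u k a - f a)) <= e.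

(* product of power series (Cauchy product) : coefficients of phi * f *)
Definition mbound (c : mi n) : nat := \max_(i < n) c i.
Definition smul (phi f : ser) : ser := fun c =>
  \sum_(a : {ffun 'I_n -> 'I_(mbound c).+1} | [forall i, (a i <= c i)%N])
     phi (mi_of a) * f [ffun i => (c i - a i)%N].

Definition hone : ser := fun a => if a == [ffun => 0%N] then 1 else 0.
Definition zcoord (i : 'I_n) : ser :=
  fun a => if a == [ffun j => nat_of_bool (j == i)] then 1 else 0.

Definition Tz (i : 'I_n) (h : ser) : ser := smul (zcoord i) h.

Definition closed_subspace (Q : set ser) : Prop :=
  [/\ forall f, Q f -> inH2 f,
      Q (fun _ => 0),
      forall f g, Q f -> Q g -> Q (fun a => f a + g a),
      forall (c : C) f, Q f -> Q (fun a => c * f a) &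
      forall (u : nat -> ser) f, (forall k, Q (u k)) -> inH2 f -> cvgH2 u f -> Q f].

(* Q is a quotient module: closed subspace with T_{z_i}^* Q \subseteq Q;
   "T_{z_i}^* f = g" means <T_{z_i} h, f> = <h, g> for all h in H^2. *)
Definition quotient_module (Q : set ser) : Prop :=
  closed_subspace Q /\
  forall (i : 'I_n) f, Q f -> exists g, Q g /\
    forall h, inH2 h -> exists c, inner (Tz i h) f c /\ inner h g c.

Definition is_proj (Q : set ser) (x y : ser) : Prop :=
  Q y /\ forall h, Q h -> inner (fun a => x a - y a) h 0.

Definition polydisc (z : 'I_n -> C) : Prop := forall i, sqmod (z i) < 1.

Definition heval (f : ser) (z : 'I_n -> C) (v : C) : Prop :=
  cvgC (fun N => bsum N (fun a => f a * \prod_(i < n) z i ^+ a i)) v.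

Definition inHinf (f : ser) : Prop :=
  exists M : R, forall z, polydisc z -> exists v, heval f z v /\ sqmod v <= M.

End Hardy.

From mathcomp Require Import all_boot all_algebra all_classical all_reals all_analysis complex.
From mathcomp Require Import separable cyclic cyclotomic.
From mathcomp Require Import ring lra order zify.
Import Order.TTheory GRing.Theory Num.Theory numFieldNormedType.Exports.
Set Implicit Arguments. Unset Strict Implicit. Unset Printing Implicit Defensive.
Local Open Scope classical_set_scope.
Local Open Scope ring_scope.
Local Open Scope complex_scope.
Import Normc.

(* Since [theta = P_Q 1], the series [theta - 1] is orthogonal to [Q]; as [Q]
   is co-invariant, the orthogonal complement of [Q] is invariant under every
   [T_{z_i}], so [z^b (theta - 1)] is orthogonal to [Q] for every multi-index
   [b].  Hence [theta p - p] is orthogonal to [Q] for every polynomial [p], in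
   particular for the truncations [f_K] of [f] in [Q].  Boundedness of [theta]
   on the polydisc makes multiplication by [theta] bounded on [H^2]
   ([|theta g|^2 <= M |g|^2]), so [theta f_K - f_K] tends to [theta f - f],
   which is therefore orthogonal to [Q]: this says [P_Q (theta f) = f].
   The multiplier bound is proved by sampling [theta] and [g] on the grid
   [r w^j] of dilated [N]-th roots of unity, where a discrete Parseval
   identity holds up to aliasing; the aliasing error vanishes as [N] grows,
   and the dilation factor tends to [1] as [r] does. *)

Section MultiIndex.
Variable n : nat.
Implicit Types (a b c d : mi n).

Definition in_box N d := [forall i, (d i < N)%N].
Definition madd a b : mi n := [ffun i => (a i + b i)%N].
Definition msub c b : mi n := [ffun i => (c i - b i)%N].
Definition mle a b := [forall i, (a i <= b i)%N].
Definition mmod N c : mi n := [ffun i => (c i %% N)%N].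
Definition munit (i : 'I_n) : mi n := [ffun j => nat_of_bool (j == i)].

Lemma in_box_mi_of N (a : {ffun 'I_n -> 'I_N}) : in_box N (mi_of a).
Proof. by apply/forallP => i; rewrite ffunE ltn_ord. Qed.

Lemma mi_of_inj N : injective (@mi_of n N).
Proof.
move=> a b /ffunP eq_ab; apply/ffunP => i; apply/val_inj.
by have := eq_ab i; rewrite !ffunE.
Qed.

Lemma in_boxP N d : in_box N d -> {a : {ffun 'I_n -> 'I_N} | mi_of a = d}.
Proof.
by move=> dN; exists [ffun i => Ordinal (forallP dN i)]; apply/ffunP => i; rewrite !ffunE.
Qed.

Lemma in_box_le N K d : (K <= N)%N -> in_box K d -> in_box N d.
Proof. by move=> KN /forallP dK; apply/forallP => i; exact: leq_trans (dK i) KN. Qed.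

Lemma in_box_mle N c d : mle d c -> in_box N c -> in_box N d.
Proof.
by move=> /forallP dc /forallP cN; apply/forallP => i; exact: leq_ltn_trans (dc i) (cN i).
Qed.

Lemma in_box_mbound c : in_box (mbound c).+1 c.
Proof. by apply/forallP => i; rewrite ltnS; exact: (leq_bigmax i). Qed.

Lemma in_box_madd L T (a : {ffun 'I_n -> 'I_L}) (b : {ffun 'I_n -> 'I_T}) :
  in_box (L + T) (madd (mi_of a) (mi_of b)).
Proof.
apply/forallP => i; rewrite !ffunE.
by have := ltn_ord (a i); have := ltn_ord (b i); lia.
Qed.

Lemma mmod_id N c : in_box N c -> mmod N c = c.
Proof. by move=> /forallP cN; apply/ffunP => i; rewrite ffunE modn_small. Qed.

Lemma mle_msub c b : mle (msub c b) c.
Proof. by apply/forallP => i; rewrite ffunE leq_subr. Qed.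

Lemma madd_eq a b c : (madd a b == c) = mle b c && (a == msub c b).
Proof.
apply/idP/idP => [/eqP <-|/andP [/forallP bc /eqP ->]].
  apply/andP; split; first by apply/forallP => i; rewrite ffunE leq_addl.
  by apply/eqP/ffunP => i; rewrite !ffunE addnK.
by apply/eqP/ffunP => i; rewrite !ffunE subnK.
Qed.

Lemma maddC a b : madd a b = madd b a.
Proof. by apply/ffunP => i; rewrite !ffunE addnC. Qed.

Lemma mle_msub_eq a b c : mle a c && (b == msub c a) = mle b c && (a == msub c b).
Proof. by rewrite -madd_eq maddC madd_eq. Qed.

Lemma mle_msub_eq0 b c : mle b c && (msub c b == [ffun => 0%N]) = (b == c).
Proof.
apply/idP/idP => [/andP [/forallP bc /eqP /ffunP cb0] | /eqP ->].
  apply/eqP/ffunP => i; have := bc i; have := cb0 i; rewrite !ffunE => cb bc_i.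
  by apply/eqP; rewrite eqn_leq bc_i -subn_eq0 cb.
apply/andP; split; first by apply/forallP => i.
by apply/eqP/ffunP => i; rewrite !ffunE subnn.
Qed.

Lemma mle_madd a b c : mle (madd a b) c = mle b c && mle a (msub c b).
Proof.
apply/forallP/andP => [abc|[/forallP bc /forallP abc] i].
  by split; apply/forallP => i; have := abc i; rewrite !ffunE; lia.
by have := bc i; have := abc i; rewrite !ffunE; lia.
Qed.

Lemma msub_madd a b c : msub (msub c b) a = msub c (madd a b).
Proof. by apply/ffunP => i; rewrite !ffunE; lia. Qed.

Lemma sum_box_delta (V : nmodType) N d (G : mi n -> V) :
  \sum_(a : {ffun 'I_n -> 'I_N}) (if mi_of a == d then G (mi_of a) else 0)
  = if in_box N d then G d else 0.
Proof.
case: ifP => dN.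
  have [a0 <-] := in_boxP dN.
  rewrite (bigD1 a0) //= eqxx big1 ?addr0 // => a a_a0.
  by rewrite (inj_eq (@mi_of_inj N)) (negbTE a_a0).
by apply: big1 => a _; case: eqP => // ad; rewrite -ad in_box_mi_of in dN.
Qed.

Lemma sum_box_supp (V : nmodType) K L (F : mi n -> V) : (K <= L)%N ->
  (forall d, ~~ in_box K d -> F d = 0) ->
  \sum_(a : {ffun 'I_n -> 'I_L}) F (mi_of a) = \sum_(a : {ffun 'I_n -> 'I_K}) F (mi_of a).
Proof.
move=> KL F0.
transitivity (\sum_(a : {ffun 'I_n -> 'I_L}) \sum_(b : {ffun 'I_n -> 'I_K})
   (if mi_of b == mi_of a then F (mi_of b) else 0)).
  by apply: eq_bigr => a _; rewrite sum_box_delta; case: ifP => // aK; rewrite F0 ?aK.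
rewrite exchange_big; apply: eq_bigr => b _; under eq_bigr do rewrite eq_sym.
have := sum_box_delta L (mi_of b) (fun _ => F (mi_of b)); rewrite /= => ->.
by rewrite (in_box_le KL) // in_box_mi_of.
Qed.

Lemma ler_sum_box (R : realDomainType) K L (F : mi n -> R) : (K <= L)%N ->
  (forall d, 0 <= F d) ->
  \sum_(a : {ffun 'I_n -> 'I_K}) F (mi_of a) <= \sum_(a : {ffun 'I_n -> 'I_L}) F (mi_of a).
Proof.
move=> KL F_ge0.
have -> : \sum_(a : {ffun 'I_n -> 'I_K}) F (mi_of a) =
    \sum_(a : {ffun 'I_n -> 'I_K}) (if in_box K (mi_of a) then F (mi_of a) else 0).
  by apply: eq_bigr => a _; rewrite in_box_mi_of.
rewrite -(@sum_box_supp _ K L (fun d => if in_box K d then F d else 0)) //; last first.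
  by move=> d /negbTE ->.
by apply: ler_sum => a _; case: ifP.
Qed.

End MultiIndex.

Section Shift.
Variables (R : realType) (n : nat).
Local Notation ser := (mi n -> R[i]).

Definition mshift (b : mi n) (s : ser) : ser :=
  fun c => if mle b c then s (msub c b) else 0.

Lemma smul_mshift (phi g : ser) c L : in_box L c ->
  smul phi g c = \sum_(b : {ffun 'I_n -> 'I_L}) g (mi_of b) * mshift (mi_of b) phi c.
Proof.
move=> cL; rewrite /smul big_mkcond /=; set M := (mbound c).+1.
transitivity (\sum_(a : {ffun 'I_n -> 'I_M}) \sum_(b : {ffun 'I_n -> 'I_L})
  (if mle (mi_of a) c && (mi_of b == msub c (mi_of a))
   then phi (mi_of a) * g (mi_of b) else 0)).
  apply: eq_bigr => a _.
  have -> : [forall i, (a i <= c i)%N] = mle (mi_of a) c.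
    by apply: eq_forallb => i; rewrite ffunE.
  have -> : [ffun i => (c i - a i)%N] = msub c (mi_of a).
    by apply/ffunP => i; rewrite !ffunE.
  case: ifP => _ /=; last by rewrite big1.
  have := @sum_box_delta _ _ L (msub c (mi_of a)) (fun d => phi (mi_of a) * g d).
  by rewrite /= (in_box_mle (mle_msub _ _) cL) => ->.
rewrite exchange_big; apply: eq_bigr => b _.
under eq_bigr do rewrite mle_msub_eq.
rewrite /mshift; case: ifP => _ /=; last by rewrite big1 ?mulr0.
have := @sum_box_delta _ _ M (msub c (mi_of b)) (fun d => phi d * g (mi_of b)).
by rewrite /= (in_box_mle (mle_msub _ _) (in_box_mbound c)) mulrC => ->.
Qed.

Lemma Tz_mshift i (s : ser) : Tz i s = mshift (munit i) s.
Proof.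
apply/funext => c; rewrite /Tz (smul_mshift _ _ (in_box_mbound c)).
transitivity (\sum_(b : {ffun 'I_n -> 'I_(mbound c).+1})
  (if mle (mi_of b) c && (munit i == msub c (mi_of b)) then s (mi_of b) else 0)).
  apply: eq_bigr => b _; rewrite /mshift /zcoord eq_sym.
  by case: (mle _ c) => /=; [case: ifP; rewrite ?mulr1 ?mulr0 | rewrite mulr0].
under eq_bigr do rewrite mle_msub_eq.
rewrite /mshift; case: ifP => _ /=; last by rewrite big1.
have := sum_box_delta (mbound c).+1 (msub c (munit i)) s.
by rewrite (in_box_mle (mle_msub _ _) (in_box_mbound c)).
Qed.

Lemma mshift_madd b d (s : ser) : mshift (madd b d) s = mshift d (mshift b s).
Proof.
apply/funext => c; rewrite /mshift mle_madd msub_madd.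
by case: (mle d c); case: (mle b _).
Qed.

Lemma mshift0 (s : ser) : mshift [ffun => 0%N] s = s.
Proof.
apply/funext => c; rewrite /mshift.
have -> : mle [ffun => 0%N] c by apply/forallP => i; rewrite ffunE.
by congr s; apply/ffunP => i; rewrite !ffunE subn0.
Qed.

End Shift.

Section ComplexNorm.
Variable R : realType.
Local Notation C := R[i].

Lemma ReD (x y : C) : complex.Re (x + y) = complex.Re x + complex.Re y.
Proof. by case: x; case: y. Qed.
Lemma ImD (x y : C) : complex.Im (x + y) = complex.Im x + complex.Im y.
Proof. by case: x; case: y. Qed.
Lemma ReM (x y : C) :
  complex.Re (x * y) = complex.Re x * complex.Re y - complex.Im x * complex.Im y.
Proof. by case: x; case: y. Qed.
Lemma ImM (x y : C) :
  complex.Im (x * y) = complex.Re x * complex.Im y + complex.Im x * complex.Re y.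
Proof. by case: x => a b; case: y => c d /=; rewrite addrC. Qed.

Lemma sqmod_ge0 (x : C) : 0 <= sqmod x.
Proof. by rewrite /sqmod addr_ge0 // sqr_ge0. Qed.

Lemma sqmodR (x : R) : sqmod x%:C = x ^+ 2.
Proof. by rewrite /sqmod /= expr0n addr0. Qed.

Lemma sqmod0 : sqmod (0 : C) = 0.
Proof. by rewrite sqmodR expr0n. Qed.

Lemma sqmod1 : sqmod (1 : C) = 1.
Proof. by rewrite sqmodR expr1n. Qed.

Lemma sqmodM (x y : C) : sqmod (x * y) = sqmod x * sqmod y.
Proof. by rewrite /sqmod ReM ImM; ring. Qed.

Lemma sqmodX (x : C) k : sqmod (x ^+ k) = sqmod x ^+ k.
Proof. by elim: k => [|k IH]; rewrite ?expr0 ?sqmod1 // !exprS sqmodM IH. Qed.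

Lemma sqmodN (x : C) : sqmod (- x) = sqmod x.
Proof. by case: x => a b; rewrite /sqmod /= !sqrrN. Qed.

Lemma sqmodD_le (x y : C) : sqmod (x + y) <= 2 * sqmod x + 2 * sqmod y.
Proof.
rewrite /sqmod ReD ImD.
set a := complex.Re x; set b := complex.Im x; set c := complex.Re y; set d := complex.Im y.
by have := sqr_ge0 (a - c); have := sqr_ge0 (b - d); nra.
Qed.

Lemma sqmod_conj (x : C) : (sqmod x)%:C = x * conjc x.
Proof.
by case: x => a b; apply/eqP; rewrite /sqmod eq_complex /=; apply/andP; split; apply/eqP; ring.
Qed.

Lemma normc_ge0 (x : C) : 0 <= normc x.
Proof. exact: (@normr_ge0 _ (Rcomplex R) x). Qed.

Lemma normc_sum_le (I : finType) (P : pred I) (F : I -> C) :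
  normc (\sum_(i | P i) F i) <= \sum_(i | P i) normc (F i).
Proof. exact: (@ler_norm_sum _ (Rcomplex R)). Qed.

Lemma sqr_normc_sqmod (x : C) : normc x ^+ 2 = sqmod x.
Proof. by case: x => a b; rewrite /normc /sqmod sqr_sqrtr // addr_ge0 // sqr_ge0. Qed.

Lemma normcR (x : R) : 0 <= x -> normc x%:C = x.
Proof. by move=> x0; rewrite /normc /= expr0n addr0 sqrtr_sqr ger0_norm. Qed.

Lemma normc_conj (x : C) : normc (conjc x) = normc x.
Proof. by case: x => a b; rewrite /normc /= sqrrN. Qed.

Lemma normc_le_ReIm (x : C) : normc x <= `|complex.Re x| + `|complex.Im x|.
Proof.
have := normc_ge0 x; have := sqr_normc_sqmod x; rewrite /sqmod.
set s := normc x; set a := complex.Re x; set b := complex.Im x => s2 s0.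
have ha := normr_ge0 a; have hb := normr_ge0 b.
have e1 : a ^+ 2 = `|a| ^+ 2 by rewrite real_normK ?num_real.
have e2 : b ^+ 2 = `|b| ^+ 2 by rewrite real_normK ?num_real.
nra.
Qed.

Lemma normc_ge_Re (x : C) : `|complex.Re x| <= normc x.
Proof.
have := normc_ge0 x; have := sqr_normc_sqmod x; rewrite /sqmod.
set s := normc x; set a := complex.Re x; set b := complex.Im x => s2 s0.
by rewrite ler_norml; apply/andP; split; nra.
Qed.

Lemma normc_ge_Im (x : C) : `|complex.Im x| <= normc x.
Proof.
have := normc_ge0 x; have := sqr_normc_sqmod x; rewrite /sqmod.
set s := normc x; set a := complex.Re x; set b := complex.Im x => s2 s0.
by rewrite ler_norml; apply/andP; split; nra.
Qed.

Lemma sqmodD_ge (x e : C) : sqmod x - 2 * (normc x * normc e) <= sqmod (x + e).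
Proof.
have tri : normc x <= normc (x + e) + normc e.
  by rewrite -{1}(addrK e x); apply: le_trans (le_normcD _ _) _; rewrite normcN.
have := normc_ge0 x; have := normc_ge0 e; have := normc_ge0 (x + e).
rewrite -!sqr_normc_sqmod; move: tri.
set a := normc x; set b := normc e; set s := normc (x + e) => tri s0 b0 a0.
have [ab|ab] := lerP a b; first by have := sqr_ge0 s; nra.
have : (a - b) ^+ 2 <= s ^+ 2 by rewrite ler_sqr ?nnegrE //; lra.
by have := sqr_ge0 b; nra.
Qed.

End ComplexNorm.

Section RealSequences.
Variable R : realType.

Lemma cvgRP (u : nat -> R) l : u @ \oo --> l <->
  forall e, 0 < e -> exists K, forall k, (K <= k)%N -> `|u k - l| <= e.
Proof.
rewrite cvgrPdistC_le; split => H e e0.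
  by have [K _ HK] := H e e0; exists K => k; exact: HK.
by have [K HK] := H e e0; exists K => // k; exact: HK.
Qed.

Lemma nondecreasing_bounded_tail (u : nat -> R) :
  (forall m k, (m <= k)%N -> u m <= u k) -> (exists M, forall k, u k <= M) ->
  forall e, 0 < e -> exists p, forall k P, (p <= k)%N -> u P - u k <= e.
Proof.
move=> u_nd [M uM] e e0.
have hs : has_sup (range u) by split; [exists (u 0%N), 0%N | exists M => _ [k _ <-]].
have [_ [p _ <-] Hp] := sup_adherent e0 hs.
exists p => k P pk.
have uP : u P <= sup (range u) by apply: sup_upper_bound => //; exists P.
by have := u_nd _ _ pk; lra.
Qed.

Lemma ge_lim (u : nat -> R) l a K0 : u @ \oo --> l ->
  (forall k, (K0 <= k)%N -> a <= u k) -> a <= l.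
Proof.
move=> /cvgRP ul ua; rewrite leNgt; apply/negP => la.
have [K HK] := ul ((a - l) / 2) (ltac:(rewrite divr_gt0; lra)).
have := HK (maxn K K0) (leq_maxl _ _); have := ua (maxn K K0) (leq_maxr _ _).
by rewrite ler_norml; lra.
Qed.

Lemma cvg_sum_fin (I : finType) (u : I -> nat -> R) (l : I -> R) :
  (forall i, u i @ \oo --> l i) -> (fun k => \sum_i u i k) @ \oo --> \sum_i l i.
Proof.
move=> ul; rewrite unlock /=; elim: (index_enum I) => [|x r IH] /=.
  exact: cvg_cst.
exact: cvgD.
Qed.

Lemma amgm_le (a b d : R) : 0 < d -> a * b <= a ^+ 2 / (2 * d) + d * b ^+ 2 / 2.
Proof.
move=> d0; have := sqr_ge0 (a - d * b).
have -> : a * b = (2 * d * (a * b)) / (2 * d) by field; lra.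
have -> : a ^+ 2 / (2 * d) + d * b ^+ 2 / 2 = (a ^+ 2 + d ^+ 2 * b ^+ 2) / (2 * d).
  by field; lra.
by move=> h; apply: ler_wpM2r; [rewrite invr_ge0; lra | nra].
Qed.

End RealSequences.

Section ComplexSequences.
Variable R : realType.
Local Notation C := R[i].

Lemma cvgC_unique (u : nat -> C) a b : cvgC u a -> cvgC u b -> a = b.
Proof.
case=> ua1 ua2 [ub1 ub2].
have e1 : complex.Re a = complex.Re b by apply: cvg_unique ua1 ub1.
have e2 : complex.Im a = complex.Im b by apply: cvg_unique ua2 ub2.
by case: a b e1 e2 {ua1 ua2 ub1 ub2} => a1 a2 [b1 b2] /= -> ->.
Qed.

Lemma eq_cvgC (u v : nat -> C) a : u =1 v -> cvgC u a -> cvgC v a.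
Proof. by move=> /funext ->. Qed.

Lemma cvgCD (u v : nat -> C) a b :
  cvgC u a -> cvgC v b -> cvgC (fun k => u k + v k) (a + b).
Proof.
case=> ua1 ua2 [vb1 vb2]; split.
  by rewrite ReD; under eq_cvg do rewrite ReD; exact: cvgD.
by rewrite ImD; under eq_cvg do rewrite ImD; exact: cvgD.
Qed.

Lemma cvgCMl (u : nat -> C) a c : cvgC u a -> cvgC (fun k => c * u k) (c * a).
Proof.
case=> ua1 ua2; split.
  rewrite ReM; under eq_cvg do rewrite ReM.
  by apply: cvgB; exact: cvgMl_tmp.
rewrite ImM; under eq_cvg do rewrite ImM.
by apply: cvgD; exact: cvgMl_tmp.
Qed.

Lemma cvgC0P (u : nat -> C) : cvgC u 0 <->
  forall e, 0 < e -> exists K, forall k, (K <= k)%N -> normc (u k) <= e.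
Proof.
split.
  case=> /cvgRP u1 /cvgRP u2 e e0.
  have [K1 HK1] := u1 _ (ltac:(rewrite divr_gt0 //) : 0 < e / 2).
  have [K2 HK2] := u2 _ (ltac:(rewrite divr_gt0 //) : 0 < e / 2).
  exists (maxn K1 K2) => k Hk.
  have := HK1 k (leq_trans (leq_maxl _ _) Hk); have := HK2 k (leq_trans (leq_maxr _ _) Hk).
  by rewrite /= !subr0 => h1 h2; apply: le_trans (normc_le_ReIm _) _; lra.
move=> u0; split; apply/cvgRP => e e0; have [K HK] := u0 e e0; exists K => k Hk;
  rewrite /= subr0; apply: le_trans (HK k Hk).
  exact: normc_ge_Re.
exact: normc_ge_Im.
Qed.

Lemma cvg_sqmod (u : nat -> C) v : cvgC u v -> (fun k => sqmod (u k)) @ \oo --> sqmod v.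
Proof.
case=> u1 u2; rewrite /sqmod; apply: cvgD; rewrite expr2;
  under eq_cvg do rewrite expr2; exact: cvgM.
Qed.

End ComplexSequences.

Section Hilbert.
Variables (R : realType) (n : nat).
Local Notation ser := (mi n -> R[i]).

Lemma innerD (f g h : ser) a b : inner f h a -> inner g h b ->
  inner (fun x => f x + g x) h (a + b).
Proof.
move=> fa gb; apply: eq_cvgC (cvgCD fa gb) => k.
by rewrite /bsum -big_split; apply: eq_bigr => x _; rewrite mulrDl.
Qed.

Lemma innerZ (f h : ser) a c : inner f h a -> inner (fun x => c * f x) h (c * a).
Proof.
move=> fa; apply: eq_cvgC (cvgCMl c fa) => k.
by rewrite /bsum mulr_sumr; apply: eq_bigr => x _; rewrite mulrA.
Qed.

Lemma bsumR_sqmod_ge0 N (f : ser) : 0 <= bsumR N (fun a => sqmod (f a)).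
Proof. by apply: sumr_ge0 => a _; exact: sqmod_ge0. Qed.

Lemma bsumR_sqmod_le N P (f : ser) : (N <= P)%N ->
  bsumR N (fun a => sqmod (f a)) <= bsumR P (fun a => sqmod (f a)).
Proof. by move=> NP; apply: ler_sum_box => // d; exact: sqmod_ge0. Qed.

Lemma inH2_bound_ge0 (f : ser) M : (forall N, bsumR N (fun a => sqmod (f a)) <= M) -> 0 <= M.
Proof. by move=> fM; exact: le_trans (bsumR_sqmod_ge0 0 f) (fM 0%N). Qed.

Lemma inH2D (f g : ser) : inH2 f -> inH2 g -> inH2 (fun a => f a + g a).
Proof.
move=> [M1 fM1] [M2 gM2]; exists (2 * M1 + 2 * M2) => N.
apply: le_trans (_ : bsumR N (fun a => 2 * sqmod (f a) + 2 * sqmod (g a)) <= _).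
  by apply: ler_sum => a _; exact: sqmodD_le.
rewrite /bsumR big_split /= -!mulr_sumr.
by apply: lerD; apply: ler_wpM2l => //; [exact: fM1 | exact: gM2].
Qed.

Lemma inH2Z (f : ser) c : inH2 f -> inH2 (fun a => c * f a).
Proof.
move=> [M fM]; exists (sqmod c * M) => N.
rewrite /bsumR; under eq_bigr do rewrite sqmodM; rewrite -mulr_sumr.
by apply: ler_wpM2l; [exact: sqmod_ge0 | exact: fM].
Qed.

Lemma inH2B (f g : ser) : inH2 f -> inH2 g -> inH2 (fun a => f a - g a).
Proof.
move=> f2 g2; have := inH2D f2 (inH2Z (-1) g2).
by under eq_fun do rewrite mulN1r.
Qed.

Lemma sqmod_coef_le (f : ser) M : (forall N, bsumR N (fun a => sqmod (f a)) <= M) ->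
  forall d, sqmod (f d) <= M.
Proof.
move=> fM d; apply: le_trans (fM (mbound d).+1).
have := sum_box_delta (mbound d).+1 d (fun a => sqmod (f a)).
rewrite in_box_mbound /= => <-.
by apply: ler_sum => a _; case: ifP => _ //; exact: sqmod_ge0.
Qed.

Lemma normc_coef_le (f : ser) B : (forall K, bsumR K (fun a => sqmod (f a)) <= B) ->
  forall a, normc (f a) <= 1 + B.
Proof.
move=> fB a; have := sqmod_coef_le fB a; have := normc_ge0 (f a).
by rewrite -sqr_normc_sqmod; have := inH2_bound_ge0 fB; nra.
Qed.

Lemma inHinf_bound_ge0 (f : ser) M :
  (forall z, polydisc z -> exists v, heval f z v /\ sqmod v <= M) -> 0 <= M.
Proof.
move=> fM; have [|v [_ vM]] := fM (fun=> 0); last exact: le_trans (sqmod_ge0 v) vM.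
by move=> i; rewrite sqmod0 ltr01.
Qed.

Lemma inH2_one : inH2 (@hone R n).
Proof.
exists 1 => N; rewrite /bsumR.
have sqmod_one a : sqmod (hone R a) = if a == [ffun => 0%N] then 1 else 0.
  by rewrite /hone; case: ifP; rewrite ?sqmod1 ?sqmod0.
under eq_bigr do rewrite sqmod_one.
by have := sum_box_delta N [ffun => 0%N] (fun _ => (1 : R)); rewrite /= => ->; case: ifP.
Qed.

Lemma bsumR_mshift_le b (s : ser) N :
  bsumR N (fun a => sqmod (mshift b s a)) <= bsumR N (fun a => sqmod (s a)).
Proof.
rewrite /bsumR /mshift.
have -> : \sum_(c : {ffun 'I_n -> 'I_N})
    sqmod (if mle b (mi_of c) then s (msub (mi_of c) b) else 0) =
  \sum_(c : {ffun 'I_n -> 'I_N}) \sum_(d : {ffun 'I_n -> 'I_N})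
    (if madd (mi_of d) b == mi_of c then sqmod (s (mi_of d)) else 0).
  apply: eq_bigr => c _; under eq_bigr do rewrite madd_eq.
  case: ifP => bc /=; last by rewrite big1 ?sqmod0.
  have := sum_box_delta N (msub (mi_of c) b) (fun d => sqmod (s d)).
  by rewrite /= (in_box_mle (mle_msub _ _) (in_box_mi_of c)) => ->.
rewrite exchange_big; apply: ler_sum => d _; under eq_bigr do rewrite eq_sym.
have := sum_box_delta N (madd (mi_of d) b) (fun _ => sqmod (s (mi_of d))); rewrite /= => ->.
by case: ifP => _ //; exact: sqmod_ge0.
Qed.

Lemma inH2_mshift b (s : ser) : inH2 s -> inH2 (mshift b s).
Proof. by move=> [M sM]; exists M => N; exact: le_trans (bsumR_mshift_le b s N) (sM N). Qed.

Definition trunc K (f : ser) : ser := fun a => if in_box K a then f a else 0.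

Lemma cvgH2_trunc (f : ser) : inH2 f -> cvgH2 (fun K => trunc K f) f.
Proof.
move=> [M fM] e e0.
have [p Hp] := @nondecreasing_bounded_tail R (fun N => bsumR N (fun a => sqmod (f a)))
  (fun m k => @bsumR_sqmod_le m k f) (ex_intro _ M fM) e e0.
exists p => k pk N; set P := maxn N k.
apply: le_trans (bsumR_sqmod_le _ (leq_maxl N k)) _.
apply: le_trans (Hp k P pk).
have sqmod_trunc a :
    sqmod (trunc k f a - f a) = sqmod (f a) - (if in_box k a then sqmod (f a) else 0).
  by rewrite /trunc; case: ifP => _; rewrite ?subrr ?sqmod0 ?subr0 ?sub0r ?sqmodN.
rewrite /bsumR; under eq_bigr do rewrite sqmod_trunc; rewrite sumrB.
rewrite (@sum_box_supp _ _ k P (fun a => if in_box k a then sqmod (f a) else 0)) ?leq_maxr //;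
  last by move=> d /negbTE ->.
by under [X in _ - X <= _]eq_bigr do rewrite in_box_mi_of.
Qed.

(* Cauchy-Schwarz, in the form of AM-GM with a small weight [d]. *)
Lemma inner0_cvgH2 (g : ser) (gk : nat -> ser) h : inH2 h -> cvgH2 gk g ->
  (forall k, inner (gk k) h 0) -> inner g h 0.
Proof.
move=> [H hH] gk_g gk0; have H0 := inH2_bound_ge0 hH.
apply/cvgC0P => eps eps0.
set d := eps / (2 * (H + 1)).
have d0 : 0 < d by rewrite divr_gt0 //; lra.
have dH : d * H <= eps / 2.
  rewrite /d; have -> : eps / (2 * (H + 1)) * H = (eps / 2) * (H / (H + 1)) by field; lra.
  by apply: ler_piMr; [lra | rewrite ler_pdivrMr; lra].
have [K HK] := gk_g _ (ltac:(apply: divr_gt0; [exact: mulr_gt0|lra]) : 0 < d * eps / 2).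
have [N1 HN1] := proj1 (cvgC0P _) (gk0 K) _ (ltac:(lra) : 0 < eps / 2).
exists N1 => N HN; set x := fun a => gk K a - g a.
have -> : bsum N (fun a => g a * conjc (h a)) =
    bsum N (fun a => gk K a * conjc (h a)) - bsum N (fun a => x a * conjc (h a)).
  by rewrite /bsum -sumrB; apply: eq_bigr => a _; rewrite /x; ring.
apply: le_trans (le_normcD _ _) _; rewrite normcN.
suff : normc (bsum N (fun a => x a * conjc (h a))) <= eps / 2 by have := HN1 N HN; lra.
apply: le_trans (normc_sum_le _ _) _.
apply: le_trans (_ : \sum_(a : {ffun 'I_n -> 'I_N})
  (sqmod (x (mi_of a)) / (2 * d) + d * sqmod (h (mi_of a)) / 2) <= _).
  by apply: ler_sum => a _; rewrite normcM normc_conj -!sqr_normc_sqmod; exact: amgm_le.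
rewrite big_split /= -!mulr_suml -mulr_sumr.
have := HK K (leqnn K) N; have := hH N; rewrite /bsumR.
set X := \sum_(i : {ffun 'I_n -> 'I_N}) sqmod (x (mi_of i)).
set Y := \sum_(i : {ffun 'I_n -> 'I_N}) sqmod (h (mi_of i)) => YH Xe.
have : X / (2 * d) <= eps / 4.
  by rewrite ler_pdivrMr; [have -> : eps / 4 * (2 * d) = d * eps / 2 by field | lra].
have : d * Y <= d * H by rewrite ler_pM2l.
rewrite mulrA; lra.
Qed.

End Hilbert.

Section OrthogonalComplement.
Variables (R : realType) (n : nat) (Q : set (mi n -> R[i])).
Local Notation ser := (mi n -> R[i]).

Definition perp (s : ser) := inH2 s /\ forall q, Q q -> inner s q 0.

Lemma perpD s t : perp s -> perp t -> perp (fun a => s a + t a).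
Proof.
move=> [s2 s0] [t2 t0]; split; first exact: inH2D.
by move=> q Qq; rewrite -(addr0 0); exact: innerD (s0 q Qq) (t0 q Qq).
Qed.

Lemma perpZ s c : perp s -> perp (fun a => c * s a).
Proof.
move=> [s2 s0]; split; first exact: inH2Z.
by move=> q Qq; rewrite -(mulr0 c); exact: innerZ (s0 q Qq).
Qed.

Lemma perp_sum (I : finType) (F : I -> ser) : (forall i, perp (F i)) ->
  perp (fun a => \sum_i F i a).
Proof.
move=> F_perp; rewrite unlock /=; elim: (index_enum I) => [|x r IH] /=; last exact: perpD.
split; first by exists 0 => N; rewrite /bsumR big1 // => a _; rewrite sqmod0.
move=> q _; apply: eq_cvgC (_ : cvgC (fun _ => 0) 0); last by split; exact: cvg_cst.
by move=> k; rewrite /bsum big1 // => a _; rewrite mul0r.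
Qed.

Hypothesis hQ : quotient_module Q.

Lemma perp_Tz s i : perp s -> perp (Tz i s).
Proof.
have [_ Q_coinv] := hQ; move=> [s2 s0]; split; first by rewrite Tz_mshift; exact: inH2_mshift.
move=> q Qq; have [g [Qg Tz_adj]] := Q_coinv i q Qq.
have [c [Tzs_q s_g]] := Tz_adj s s2.
by rewrite -(cvgC_unique s_g (s0 g Qg)).
Qed.

Lemma perp_mshift s b : perp s -> perp (mshift b s).
Proof.
move=> s_perp; elim: {b}(\sum_i b i)%N {-2}b (erefl (\sum_i b i)%N) => [|k IH] b b_k.
  suff -> : b = [ffun => 0%N] by rewrite mshift0.
  apply/ffunP => i; rewrite ffunE; apply/eqP; rewrite -leqn0 -b_k.
  by rewrite (bigD1 i) //= leq_addr.
have [i bi_gt0] : exists i, (0 < b i)%N.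
  apply/existsP; apply: contraT; rewrite negb_exists => /forallP b0.
  by rewrite big1 // in b_k => i _; have := b0 i; rewrite lt0n negbK => /eqP.
have -> : b = madd (msub b (munit i)) (munit i).
  by apply/ffunP => j; rewrite !ffunE; case: eqP => [->|_] /=; lia.
rewrite mshift_madd -Tz_mshift; apply/perp_Tz/IH.
rewrite (bigD1 i) //= in b_k; rewrite (bigD1 i) //= !ffunE eqxx /=.
rewrite (eq_bigr (fun j => b j)) => [|j ji]; last by rewrite !ffunE (negbTE ji) subn0.
by move: b_k bi_gt0; set S := (\sum_(j | j != i) b j)%N; lia.
Qed.

End OrthogonalComplement.

Section RootsOfUnity.
Variable R : realType.
Local Notation C := R[i].

Lemma exists_prim_root N : (0 < N)%N -> exists w : C, N.-primitive_root w.
Proof.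
move=> N_gt0; pose p : {poly C} := 'X^N - 1.
have [r Dp] := closed_field_poly_normal p.
rewrite (monicP _) ?monicXnsubC // scale1r in Dp.
have r_roots : all N.-unity_root r by apply/allP => z; rewrite -root_prod_XsubC -Dp.
have size_r : (N < (size r).+1)%N by rewrite -(size_prod_XsubC r id) -Dp size_XnsubC.
have [|w] := hasP (has_prim_root N_gt0 r_roots _ size_r); last by exists w.
by rewrite -separable_prod_XsubC -Dp separable_Xn_sub_1 // pnatr_eq0 -lt0n.
Qed.

Section PrimRoot.
Variables (N : nat) (w : C).
Hypotheses (N_gt0 : (0 < N)%N) (w_prim : N.-primitive_root w).

Lemma prim_root_sqmod : sqmod w = 1.
Proof.
apply/eqP; rewrite -(pexpr_eq1 N_gt0 (sqmod_ge0 w)) -sqmodX (prim_expr_order w_prim).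
by rewrite sqmod1.
Qed.

Lemma prim_root_conj : conjc w = w ^+ N.-1.
Proof.
have w_conj : w * conjc w = 1 by rewrite -sqmod_conj prim_root_sqmod.
have w0 : w != 0 by apply: contra_eq_neq w_conj => ->; rewrite mul0r eq_sym oner_neq0.
apply: (mulfI w0); rewrite w_conj -exprS prednK //; exact/esym/prim_expr_order.
Qed.

End PrimRoot.

Lemma sum_unity_root N (u : C) : u ^+ N = 1 ->
  \sum_(x < N) u ^+ x = if u == 1 then N%:R else 0.
Proof.
move=> uN; case: eqP => [->|/eqP u1].
  by rewrite (eq_bigr (fun _ => 1)) ?sumr_const ?card_ord // => x _; rewrite expr1n.
have := subrX1 u N; rewrite uN subrr => /esym/eqP; rewrite mulf_eq0 subr_eq0 (negbTE u1).
by move/eqP.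
Qed.

End RootsOfUnity.

Lemma dvdn_addMpred N c d : (0 < N)%N -> (N %| c + N.-1 * d)%N = (c %% N == d %% N)%N.
Proof.
move=> N0; rewrite /dvdn -(mod0n N) -(eqn_modDr d) add0n -addnA -{2}(mul1n d) -mulnDl.
by rewrite addn1 prednK // addnC mulnC modnMDl.
Qed.

(* Evaluation on the grid [{(w ^+ j_i)_i | j in 'I_N^n}] of [N]-th roots of
   unity; the grid values of a polynomial determine its coefficients only up
   to aliasing modulo [N], which [alias_sum] records. *)
Section GridFourier.
Variables (R : realType) (n : nat).
Local Notation C := R[i].
Local Notation ser := (mi n -> C).

Definition grid_mono N (w : C) (j : {ffun 'I_n -> 'I_N}) (c : mi n) : C :=
  \prod_i w ^+ (j i * c i).

Definition grid_eval N W (w : C) (j : {ffun 'I_n -> 'I_N}) (G : ser) : C :=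
  \sum_(c : {ffun 'I_n -> 'I_W}) G (mi_of c) * grid_mono w j (mi_of c).

Definition alias_sum N W (m : mi n) (G : ser) : C :=
  \sum_(c : {ffun 'I_n -> 'I_W}) (if mmod N (mi_of c) == m then G (mi_of c) else 0).

Lemma grid_mono_madd N (w : C) (j : {ffun 'I_n -> 'I_N}) a b :
  grid_mono w j (madd a b) = grid_mono w j a * grid_mono w j b.
Proof. by rewrite /grid_mono -big_split; apply: eq_bigr => i _; rewrite ffunE mulnDr exprD. Qed.

Lemma grid_mono_orth N w c d : (0 < N)%N -> N.-primitive_root w ->
  \sum_(j : {ffun 'I_n -> 'I_N}) grid_mono w j c * conjc (grid_mono w j d)
  = if mmod N c == mmod N d then (N ^ n)%:R else 0.
Proof.
move=> N0 w_prim.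
have grid_mono_conj (j : {ffun 'I_n -> 'I_N}) : grid_mono w j c * conjc (grid_mono w j d)
    = \prod_i (w ^+ (c i + N.-1 * d i)) ^+ j i.
  rewrite /grid_mono rmorph_prod -big_split; apply: eq_bigr => i _.
  rewrite rmorphXn /= (prim_root_conj N0 w_prim) -!exprM -exprD; congr (_ ^+ _).
  by rewrite mulnDl mulnC; congr (_ + _)%N; rewrite mulnCA mulnC.
under eq_bigr do rewrite grid_mono_conj.
rewrite -(bigA_distr_bigA (fun i (x : 'I_N) => (w ^+ (c i + N.-1 * d i)) ^+ x)) /=.
have unity i : (w ^+ (c i + N.-1 * d i)) ^+ N = 1.
  by rewrite exprAC (prim_expr_order w_prim) expr1n.
under eq_bigr => i _ do
  rewrite sum_unity_root ?unity // -(prim_order_dvd w_prim) dvdn_addMpred //.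
case: eqP => [/ffunP cd|cd].
  rewrite (eq_bigr (fun _ => N%:R)) ?prodr_const ?card_ord ?natrX // => i _.
  by have := cd i; rewrite !ffunE => ->; rewrite eqxx.
have [i cdi] : exists i, (c i %% N != d i %% N)%N.
  apply/existsP; apply: contraT; rewrite negb_exists => /forallP cd_eq.
  by case: cd; apply/ffunP => i; rewrite !ffunE; apply/eqP; have := cd_eq i; rewrite negbK.
by rewrite (bigD1 i) //= (negbTE cdi) mul0r.
Qed.

Lemma grid_parseval_conj N W w (G : ser) : (0 < N)%N -> N.-primitive_root w ->
  \sum_(j : {ffun 'I_n -> 'I_N}) grid_eval W w j G * conjc (grid_eval W w j G)
  = (N ^ n)%:R * \sum_(m : {ffun 'I_n -> 'I_N})
      alias_sum N W (mi_of m) G * conjc (alias_sum N W (mi_of m) G).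
Proof.
move=> N0 w_prim.
transitivity (\sum_(c : {ffun 'I_n -> 'I_W}) \sum_(d : {ffun 'I_n -> 'I_W})
   G (mi_of c) * conjc (G (mi_of d)) *
   (if mmod N (mi_of c) == mmod N (mi_of d) then (N ^ n)%:R else 0)).
  rewrite /grid_eval.
  under eq_bigr do rewrite rmorph_sum mulr_suml.
  under eq_bigr do under eq_bigr do rewrite mulr_sumr.
  rewrite exchange_big; apply: eq_bigr => c _; rewrite exchange_big; apply: eq_bigr => d _.
  rewrite -(grid_mono_orth (mi_of c) (mi_of d) N0 w_prim) mulr_sumr; apply: eq_bigr => j _.
  by rewrite rmorphM; ring.
symmetry; rewrite /alias_sum big_distrr /=.
transitivity (\sum_(m : {ffun 'I_n -> 'I_N}) \sum_(c : {ffun 'I_n -> 'I_W})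
  \sum_(d : {ffun 'I_n -> 'I_W})
  (N ^ n)%:R * ((if mmod N (mi_of c) == mi_of m then G (mi_of c) else 0) *
      conjc (if mmod N (mi_of d) == mi_of m then G (mi_of d) else 0))).
  apply: eq_bigr => m _; rewrite rmorph_sum big_distrl /= big_distrr /=.
  by apply: eq_bigr => c _; rewrite big_distrr /= big_distrr.
rewrite exchange_big; apply: eq_bigr => c _; rewrite exchange_big; apply: eq_bigr => d _.
transitivity (\sum_(m : {ffun 'I_n -> 'I_N}) (if mi_of m == mmod N (mi_of c) then
   (N ^ n)%:R * (G (mi_of c) * conjc (G (mi_of d))) *
   (if mmod N (mi_of d) == mi_of m then 1 else 0) else 0)).
  apply: eq_bigr => m _; rewrite [mi_of m == _]eq_sym.
  by case: ifP => _; case: ifP => _; rewrite ?rmorph0; ring.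
have := sum_box_delta N (mmod N (mi_of c)) (fun x => (N ^ n)%:R *
  (G (mi_of c) * conjc (G (mi_of d))) * (if mmod N (mi_of d) == x then 1 else 0)).
have -> : in_box N (mmod N (mi_of c)) by apply/forallP => i; rewrite ffunE ltn_pmod.
move=> /= ->; rewrite [mmod N (mi_of d) == _]eq_sym; case: ifP => _; ring.
Qed.

Lemma grid_parseval N W w (G : ser) : (0 < N)%N -> N.-primitive_root w ->
  \sum_(j : {ffun 'I_n -> 'I_N}) sqmod (grid_eval W w j G)
  = (N ^ n)%:R * \sum_(m : {ffun 'I_n -> 'I_N}) sqmod (alias_sum N W (mi_of m) G).
Proof.
move=> N0 w_prim; apply: (@complexI R).
rewrite rmorphM rmorph_sum rmorph_nat rmorph_sum /=.
under eq_bigr do rewrite sqmod_conj; under [in RHS]eq_bigr do rewrite sqmod_conj.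
exact: grid_parseval_conj.
Qed.

End GridFourier.

Section Dilation.
Variables (R : realType) (n : nat).
Local Notation C := R[i].
Local Notation ser := (mi n -> C).

Definition mpow (r : R) (a : mi n) : R := \prod_i r ^+ a i.

Lemma mpow_madd r a b : mpow r (madd a b) = mpow r a * mpow r b.
Proof. by rewrite /mpow -big_split; apply: eq_bigr => i _; rewrite ffunE exprD. Qed.

Lemma mpow_ge0 r a : 0 <= r -> 0 <= mpow r a.
Proof. by move=> r0; apply: prodr_ge0 => i _; exact: exprn_ge0. Qed.

Lemma mpow_le1 r a : 0 <= r <= 1 -> mpow r a <= 1.
Proof.
by case/andP => r0 r1; apply: prodr_ile1 => i _; rewrite exprn_ge0 ?exprn_ile1.
Qed.

Lemma mpow_in_box_ge r a T : 0 <= r <= 1 -> in_box T a -> r ^+ (T * n) <= mpow r a.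
Proof.
case/andP => r0 r1 /forallP aT.
have -> : r ^+ (T * n) = \prod_(i < n) r ^+ T by rewrite prodr_const card_ord exprM.
apply: ler_prod => i _; rewrite exprn_ge0 //=.
by apply: ler_wiXn2l => //; exact: ltnW.
Qed.

Lemma heval_partial_grid L N (w : C) (j : {ffun 'I_n -> 'I_N}) r (F : ser) :
  bsum L (fun a => F a * \prod_i (r%:C * w ^+ j i) ^+ a i)
  = grid_eval L w j (fun a => F a * (mpow r a)%:C).
Proof.
apply: eq_bigr => a _; rewrite -mulrA; congr (_ * _).
rewrite /mpow /grid_mono rmorph_prod -big_split; apply: eq_bigr => i _.
by rewrite exprMn rmorphXn exprM.
Qed.

Definition mconv L T (F1 F2 : ser) (c : mi n) : C :=
  \sum_(a : {ffun 'I_n -> 'I_L}) \sum_(b : {ffun 'I_n -> 'I_T})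
    (if madd (mi_of a) (mi_of b) == c then F1 (mi_of a) * F2 (mi_of b) else 0).

Lemma grid_eval_mul L T N (w : C) (j : {ffun 'I_n -> 'I_N}) (F1 F2 : ser) :
  grid_eval L w j F1 * grid_eval T w j F2 = grid_eval (L + T) w j (mconv L T F1 F2).
Proof.
rewrite /grid_eval /mconv big_distrl /=.
transitivity (\sum_(a : {ffun 'I_n -> 'I_L}) \sum_(b : {ffun 'I_n -> 'I_T})
   \sum_(c : {ffun 'I_n -> 'I_(L + T)}) (if mi_of c == madd (mi_of a) (mi_of b) then
      F1 (mi_of a) * F2 (mi_of b) * grid_mono w j (mi_of c) else 0)).
  apply: eq_bigr => a _; rewrite big_distrr /=; apply: eq_bigr => b _.
  have := sum_box_delta (L + T) (madd (mi_of a) (mi_of b))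
    (fun c => F1 (mi_of a) * F2 (mi_of b) * grid_mono w j c).
  by rewrite in_box_madd /= => ->; rewrite grid_mono_madd; ring.
symmetry; under eq_bigr do rewrite big_distrl /=.
rewrite exchange_big; apply: eq_bigr => a _; under eq_bigr do rewrite big_distrl /=.
rewrite exchange_big; apply: eq_bigr => b _; apply: eq_bigr => c _.
by rewrite eq_sym; case: ifP => _; rewrite ?mul0r.
Qed.

Lemma mconv_mpow L T r (F1 F2 : ser) c :
  mconv L T (fun a => F1 a * (mpow r a)%:C) (fun a => F2 a * (mpow r a)%:C) c
  = mconv L T F1 F2 c * (mpow r c)%:C.
Proof.
rewrite /mconv big_distrl /=; apply: eq_bigr => a _; rewrite big_distrl /=.
apply: eq_bigr => b _; case: eqP => [<-|_]; last by rewrite mul0r.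
by rewrite mpow_madd rmorphM /=; ring.
Qed.

Lemma mconv_mshift L T (F1 F2 : ser) c : in_box L c ->
  mconv L T F1 F2 c = \sum_(b : {ffun 'I_n -> 'I_T}) F2 (mi_of b) * mshift (mi_of b) F1 c.
Proof.
move=> cL; rewrite /mconv exchange_big; apply: eq_bigr => b _.
under eq_bigr do rewrite madd_eq.
rewrite /mshift; case: ifP => _ /=; last by rewrite big1 ?mulr0.
have := sum_box_delta L (msub c (mi_of b)) (fun a => F1 a * F2 (mi_of b)).
by rewrite (in_box_mle (mle_msub _ _) cL) /= => ->; rewrite mulrC.
Qed.

Lemma mconv_smul L T (F1 F2 : ser) c : (T <= L)%N -> in_box T c ->
  mconv L T F1 F2 c = smul F1 F2 c.
Proof. by move=> TL cT; rewrite mconv_mshift ?(in_box_le TL) // (smul_mshift _ _ cT). Qed.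

Lemma normc_mconv_le L T (F1 F2 : ser) c beta : (forall a, normc (F1 a) <= beta) ->
  normc (mconv L T F1 F2 c) <= beta * \sum_(b : {ffun 'I_n -> 'I_T}) normc (F2 (mi_of b)).
Proof.
move=> F1_le; have beta0 : 0 <= beta by exact: le_trans (normc_ge0 _) (F1_le c).
rewrite /mconv exchange_big; apply: le_trans (normc_sum_le _ _) _.
rewrite big_distrr /=; apply: ler_sum => b _; under eq_bigr do rewrite madd_eq.
case: (mle (mi_of b) c) => /=; last by rewrite big1 ?normc0 ?mulr_ge0 ?normc_ge0.
have := sum_box_delta L (msub c (mi_of b)) (fun a => F1 a * F2 (mi_of b)); rewrite /= => ->.
case: ifP => _; last by rewrite normc0 mulr_ge0 ?normc_ge0.
by rewrite normcM; apply: ler_wpM2r; [exact: normc_ge0 | exact: F1_le].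
Qed.

End Dilation.

Section RealEstimates.
Variable R : realType.

Lemma sum_geom_le (t : R) W : 0 < t < 1 -> \sum_(x < W) t ^+ x <= (1 - t)^-1.
Proof.
case/andP => t0 t1; have := geometric_le_lim W ler01 t0 (ltac:(by rewrite gtr0_norm)).
rewrite /series /= big_mkord div1r; apply: le_trans; apply: ler_sum => x _.
by rewrite mul1r.
Qed.

Lemma bernoulli_le (d : R) k : 0 <= d <= 1 -> 1 - k%:R * d <= (1 - d) ^+ k.
Proof.
case/andP => d0 d1; elim: k => [|k IH]; first by rewrite expr0 mul0r subr0.
rewrite exprS -addn1 natrD.
have step : (1 - k%:R * d) * (1 - d) <= (1 - d) * (1 - d) ^+ k.
  by rewrite mulrC; apply: ler_wpM2l => //; lra.
have : 0 <= k%:R * d * d by rewrite !mulr_ge0.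
nra.
Qed.

(* The witness is [t = 1 - d] with [d] small enough for Bernoulli's inequality
   to beat the gap [a - b]. *)
Lemma le_of_expr_mul_le (a b : R) k : 0 <= a ->
  (forall t, 0 < t < 1 -> t ^+ k * a <= b) -> a <= b.
Proof.
move=> a0 ab; rewrite leNgt; apply/negP => ba.
have b0 : 0 <= b.
  apply: le_trans (ab 2^-1 _); first by rewrite mulr_ge0 // exprn_ge0 // invr_ge0.
  by rewrite invr_gt0 invf_lt1; lra.
have k0 : 0 <= k%:R * a :> R by rewrite mulr_ge0.
set den := k%:R * a + a + 1; have den0 : 0 < den by rewrite /den; lra.
set d := (a - b) / den.
have d0 : 0 < d by rewrite divr_gt0 //; lra.
have d1 : d < 1 by rewrite ltr_pdivrMr //; rewrite /den; lra.
have : (1 - k%:R * d) * a <= (1 - d) ^+ k * a by apply/ler_wpM2r/bernoulli_le; lra.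
have : k%:R * d * a < a - b.
  rewrite (_ : k%:R * d * a = (a - b) * (k%:R * a / den)); last by rewrite /d; field; lra.
  by rewrite -[ltRHS]mulr1 ltr_pM2l ?ltr_pdivrMr //; rewrite /den; lra.
have := ab (1 - d) (ltac:(apply/andP; split; lra)).
have : (1 - k%:R * d) * a = a - k%:R * d * a by ring.
lra.
Qed.

Lemma le_of_le_add_expr (X Y A t : R) N1 : 0 <= A -> 0 <= t < 1 ->
  (forall N, (N1 <= N)%N -> X <= Y + A * t ^+ N) -> X <= Y.
Proof.
move=> A0 /andP [t0 t1] XY; rewrite leNgt; apply/negP => YX.
have /cvgRP t_cvg := @cvg_expr R t (ltac:(by rewrite ger0_norm)).
have [K HK] := t_cvg ((X - Y) / (A + 1)) (ltac:(rewrite divr_gt0; lra)).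
set N := maxn K N1.
have := HK N (leq_maxl _ _); rewrite subr0 ger0_norm ?exprn_ge0 // => tN.
have : A * t ^+ N <= A * ((X - Y) / (A + 1)) by apply: ler_wpM2l.
have : A * ((X - Y) / (A + 1)) < X - Y by rewrite mulrA ltr_pdivrMr; [nra | lra].
by have := XY N (leq_maxr _ _); lra.
Qed.

End RealEstimates.

Section Tail.
Variables (R : realType) (n : nat).

Lemma sum_mpow_coord_ge (t : R) W N (i : 'I_n) : 0 < t < 1 ->
  \sum_(c : {ffun 'I_n -> 'I_W}) (if (N <= mi_of c i)%N then mpow (t ^+ 2) (mi_of c) else 0)
  <= t ^+ N / (1 - t) ^+ n.
Proof.
move=> /andP [t0 t1].
set f := fun (k : 'I_n) (x : 'I_W) => if (k == i) && (x < N)%N then 0 else (t ^+ 2) ^+ x.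
have -> : \sum_(c : {ffun 'I_n -> 'I_W})
    (if (N <= mi_of c i)%N then mpow (t ^+ 2) (mi_of c) else 0) = \prod_k \sum_(x : 'I_W) f k x.
  rewrite (bigA_distr_bigA f) /=; apply: eq_bigr => c _.
  rewrite /mpow (bigD1 i) //= [in RHS](bigD1 i) //= /f eqxx /= ffunE leqNgt.
  case: (c i < N)%N => /=; first by rewrite mul0r.
  by congr (_ * _); apply: eq_bigr => k ki; rewrite (negbTE ki) /= ffunE.
apply: le_trans (_ : _ <= \prod_k ((if k == i then t ^+ N else 1) * (1 - t)^-1)) _.
  apply: ler_prod => k _; apply/andP; split.
    by apply: sumr_ge0 => x _; rewrite /f; case: ifP => _ //; exact: exprn_ge0 (sqr_ge0 t).
  apply: le_trans (_ : _ <= \sum_(x < W) (if k == i then t ^+ N else 1) * t ^+ x) _.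
    apply: ler_sum => x _; rewrite /f -exprM mulnC exprM expr2.
    have tx1 : t ^+ x <= 1 by apply: exprn_ile1; lra.
    have tx0 : 0 <= t ^+ x by apply: exprn_ge0; lra.
    case: eqP => _ /=; last by rewrite mul1r ler_piMl.
    case: ifP => xN; first by rewrite mulr_ge0 // exprn_ge0 //; lra.
    by apply: ler_wpM2r => //; apply: ler_wiXn2l; try lra; rewrite leqNgt xN.
  rewrite -mulr_sumr; apply: ler_wpM2l; first by case: ifP => _ //; apply: exprn_ge0; lra.
  by apply: sum_geom_le; lra.
rewrite big_split /= prodr_const card_ord exprVn (bigD1 i) //= eqxx big1 ?mulr1 //.
by move=> k ki; rewrite (negbTE ki).
Qed.

Lemma sum_out_box_mpow_le (t : R) W N : 0 < t < 1 ->
  \sum_(c : {ffun 'I_n -> 'I_W}) (if in_box N (mi_of c) then 0 else mpow (t ^+ 2) (mi_of c))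
  <= n%:R * (t ^+ N / (1 - t) ^+ n).
Proof.
move=> t01; have t2 : 0 <= t ^+ 2 by apply: exprn_ge0; case/andP: t01 => /ltW.
apply: le_trans (_ : _ <= \sum_(c : {ffun 'I_n -> 'I_W}) \sum_(i < n)
   (if (N <= mi_of c i)%N then mpow (t ^+ 2) (mi_of c) else 0)) _.
  apply: ler_sum => c _; case: ifP => cN.
    by apply: sumr_ge0 => i _; case: ifP => _ //; exact: mpow_ge0.
  have [i Ni] : exists i, (N <= mi_of c i)%N.
    by move/negbT: cN; rewrite negb_forall => /existsP [i ci]; exists i; rewrite leqNgt.
  rewrite (bigD1 i) //= Ni lerDl.
  by apply: sumr_ge0 => k _; case: ifP => _ //; exact: mpow_ge0.
rewrite exchange_big mulr_natl -[X in _ *+ X](card_ord n) -sumr_const.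
by apply: ler_sum => i _; exact: sum_mpow_coord_ge.
Qed.

End Tail.

Section GridSampling.
Variables (R : realType) (n : nat) (theta g : mi n -> R[i]) (beta t : R) (T N : nat) (w : R[i]).
Hypotheses (theta_le : forall a, normc (theta a) <= beta) (t01 : 0 < t < 1)
  (TN : (T <= N)%N) (N_gt0 : (0 < N)%N) (w_prim : N.-primitive_root w).

Local Notation r := (t ^+ 2).
Local Notation dil F := (fun a => F a * (mpow r a)%:C).
Local Notation D := (beta * \sum_(b : {ffun 'I_n -> 'I_T}) normc (g (mi_of b))).
(* [tau] bounds the total weight [mpow r] outside the box [N]. *)
Local Notation tau := (n%:R * (t ^+ N / (1 - t) ^+ n)).

Let r01 : 0 <= r <= 1.
Proof. by case/andP: t01 => t0 t1; rewrite sqr_ge0 /= expr2; nra. Qed.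

Lemma grid_sum_le (v : {ffun 'I_n -> 'I_N} -> R[i]) M : (forall j, sqmod (v j) <= M) ->
  \sum_j sqmod (v j) * sqmod (grid_eval T w j (dil g))
  <= M * ((N ^ n)%:R * bsumR T (fun a => sqmod (g a))).
Proof.
move=> vM; have M0 : 0 <= M := le_trans (sqmod_ge0 _) (vM [ffun => Ordinal N_gt0]).
apply: le_trans (_ : _ <= \sum_j M * sqmod (grid_eval T w j (dil g))) _.
  by apply: ler_sum => j _; apply: ler_wpM2r; [exact: sqmod_ge0 | exact: vM].
rewrite -mulr_sumr grid_parseval //; apply/ler_wpM2l/ler_wpM2l => //.
have alias_small (m : {ffun 'I_n -> 'I_N}) :
    alias_sum N T (mi_of m) (dil g) = if in_box T (mi_of m) then dil g (mi_of m) else 0.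
  rewrite /alias_sum; under eq_bigr do rewrite (mmod_id (in_box_le TN (in_box_mi_of _))).
  exact: (sum_box_delta T (mi_of m) (dil g)).
under eq_bigr do rewrite alias_small.
rewrite (@sum_box_supp _ _ T N (fun m => sqmod (if in_box T m then dil g m else 0))) //;
  last by move=> d /negbTE ->; rewrite sqmod0.
apply: ler_sum => m _; rewrite in_box_mi_of sqmodM sqmodR.
apply: ler_piMr; first exact: sqmod_ge0.
by have := mpow_le1 (mi_of m) r01; have := mpow_ge0 (mi_of m) (proj1 (andP r01)); nra.
Qed.

Section Aliasing.
Variable L : nat.
Hypothesis TL : (T <= L)%N.

Lemma alias_sum_mconv_ge m : in_box T m ->
  t ^+ (4 * (T * n)) * sqmod (smul theta g m) - 2 * (D * (D * tau))
  <= sqmod (alias_sum N (L + T) m (mconv L T (dil theta) (dil g))).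
Proof.
move=> mT; set G := mconv L T (dil theta) (dil g).
have beta0 : 0 <= beta := le_trans (normc_ge0 _) (theta_le 0).
have D0 : 0 <= D by rewrite mulr_ge0 // sumr_ge0 // => b _; exact: normc_ge0.
have normc_G c : normc (G c) <= D * mpow r c.
  rewrite /G mconv_mpow normcM normcR ?mpow_ge0 //; last by case/andP: r01.
  by apply: ler_wpM2r; [apply: mpow_ge0; case/andP: r01 | exact: normc_mconv_le].
set E := \sum_(c : {ffun 'I_n -> 'I_(L + T)})
   (if (mmod N (mi_of c) == m) && (mi_of c != m) then G (mi_of c) else 0).
have -> : alias_sum N (L + T) m G = G m + E.
  have := sum_box_delta (L + T) m G; rewrite (in_box_le (leq_addl L T) mT) => <-.
  rewrite /alias_sum /E -big_split; apply: eq_bigr => c _ /=.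
  case: (mi_of c =P m) => [->|cm]; last by rewrite andbT; case: ifP; rewrite ?add0r ?addr0.
  by rewrite mmod_id ?(in_box_le TN) // eqxx addr0.
(* The aliased terms come from indices [c] outside the box [N]. *)
have normc_E : normc E <= D * tau.
  apply: le_trans (normc_sum_le _ _) _.
  apply: le_trans (_ : _ <= \sum_(c : {ffun 'I_n -> 'I_(L + T)})
      D * (if in_box N (mi_of c) then 0 else mpow r (mi_of c))) _.
    apply: ler_sum => c _; case: ifP => [/andP [/eqP cm c_m]|_]; last first.
      by rewrite normc0; case: ifP; rewrite ?mulr0 // mulr_ge0 // mpow_ge0 //; case/andP: r01.
    have -> : in_box N (mi_of c) = false.
      by apply/negP => cN; move: c_m; rewrite -cm mmod_id ?eqxx.
    exact: normc_G.
  by rewrite -mulr_sumr; apply/ler_wpM2l/sum_out_box_mpow_le.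
have normc_Gm : normc (G m) <= D.
  by apply: le_trans (normc_G m) _; rewrite -[leRHS]mulr1 ler_wpM2l // mpow_le1.
have sqmod_Gm : t ^+ (4 * (T * n)) * sqmod (smul theta g m) <= sqmod (G m).
  rewrite /G mconv_mpow sqmodM sqmodR (mconv_smul _ _ TL mT) [leRHS]mulrC.
  apply: ler_wpM2r; first exact: sqmod_ge0.
  have t0 : 0 <= t by case/andP: t01 => /ltW.
  have -> : (4 * (T * n) = 2 * (T * n) * 2)%N by lia.
  rewrite (exprM t _ 2) (exprM t 2) ler_sqr ?nnegrE ?mpow_ge0 ?exprn_ge0 ?sqr_ge0 //.
  exact: mpow_in_box_ge.
apply: le_trans (sqmodD_ge _ _).
by have := ler_pM (normc_ge0 _) (normc_ge0 _) normc_Gm normc_E; lra.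
Qed.

Lemma grid_sum_ge :
  (N ^ n)%:R * (t ^+ (4 * (T * n)) * bsumR T (fun a => sqmod (smul theta g a))
                - (T ^ n)%:R * (2 * (D * (D * tau))))
  <= \sum_(j : {ffun 'I_n -> 'I_N})
       sqmod (grid_eval L w j (dil theta)) * sqmod (grid_eval T w j (dil g)).
Proof.
under [X in _ <= X]eq_bigr do rewrite -sqmodM grid_eval_mul.
rewrite grid_parseval //; apply: ler_wpM2l => //.
set G := mconv L T _ _.
apply: le_trans _ (ler_sum_box (F := fun m => sqmod (alias_sum N (L + T) m G)) TN
  (fun _ => sqmod_ge0 _)).
have -> : (T ^ n)%:R * (2 * (D * (D * tau))) =
    \sum_(m : {ffun 'I_n -> 'I_T}) 2 * (D * (D * tau)).
  by rewrite sumr_const card_ffun !card_ord mulr_natl.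
rewrite /bsumR mulr_sumr -sumrB.
by apply: ler_sum => m _; exact: alias_sum_mconv_ge (in_box_mi_of m).
Qed.

End Aliasing.

End GridSampling.

Section MultiplierBound.
Variables (R : realType) (n : nat) (theta : mi n -> R[i]) (beta M : R).
Local Notation ser := (mi n -> R[i]).
Hypotheses (theta_le : forall a, normc (theta a) <= beta)
  (theta_M : forall z, polydisc z -> exists v, heval theta z v /\ sqmod v <= M).

Lemma bsumR_smul_le_aliased (g : ser) T N t : 0 < t < 1 -> (T <= N)%N -> (0 < N)%N ->
  t ^+ (4 * (T * n)) * bsumR T (fun a => sqmod (smul theta g a))
  <= M * bsumR T (fun a => sqmod (g a)) + (T ^ n)%:R *
     (2 * ((beta * \sum_(b : {ffun 'I_n -> 'I_T}) normc (g (mi_of b))) *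
          ((beta * \sum_(b : {ffun 'I_n -> 'I_T}) normc (g (mi_of b))) *
           (n%:R * (t ^+ N / (1 - t) ^+ n))))).
Proof.
move=> t01 TN N_gt0; have [w w_prim] := exists_prim_root R N_gt0.
set r := t ^+ 2; pose z (j : {ffun 'I_n -> 'I_N}) i := r%:C * w ^+ j i.
have z_disc j : polydisc (z j).
  move=> i; rewrite /z sqmodM sqmodR sqmodX (prim_root_sqmod N_gt0 w_prim) expr1n mulr1.
  by case/andP: t01 => t0 t1; rewrite /r -exprM; apply: exprn_ilt1; rewrite ?ltW.
have [v vM] := choice (fun j => theta_M (z_disc j)).
have grid_cvg : (fun L => \sum_(j : {ffun 'I_n -> 'I_N})
    sqmod (grid_eval L w j (fun a => theta a * (mpow r a)%:C)) *
    sqmod (grid_eval T w j (fun a => g a * (mpow r a)%:C))) @ \oo -->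
  \sum_j sqmod (v j) * sqmod (grid_eval T w j (fun a => g a * (mpow r a)%:C)).
  apply: cvg_sum_fin => j; apply: cvgM; last exact: cvg_cst.
  by apply/cvg_sqmod/(eq_cvgC _ (vM j).1) => L; exact: heval_partial_grid.
have := ge_lim grid_cvg (grid_sum_ge g theta_le t01 TN N_gt0 w_prim).
have := grid_sum_le g t01 TN N_gt0 w_prim (fun j => (vM j).2).
rewrite mulrCA => up low; have := le_trans low up.
by rewrite ler_pM2l ?ltr0n ?expn_gt0 ?N_gt0 // lerBlDr.
Qed.

Lemma bsumR_smul_le (g : ser) T :
  bsumR T (fun a => sqmod (smul theta g a)) <= M * bsumR T (fun a => sqmod (g a)).
Proof.
apply: (@le_of_expr_mul_le _ _ _ (4 * (T * n))); first exact: bsumR_sqmod_ge0.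
move=> t t01; set D := beta * \sum_(b : {ffun 'I_n -> 'I_T}) normc (g (mi_of b)).
have [t0 t1] := andP t01.
have A0 : 0 <= (T ^ n)%:R * (2 * (D * (D * (n%:R / (1 - t) ^+ n)))).
  have beta0 : 0 <= beta := le_trans (normc_ge0 _) (theta_le 0).
  have sum_ge0 : 0 <= \sum_(b : {ffun 'I_n -> 'I_T}) normc (g (mi_of b)).
    by apply: sumr_ge0 => b _; exact: normc_ge0.
  by rewrite !mulr_ge0 ?invr_ge0 ?exprn_ge0 //; lra.
apply: (@le_of_le_add_expr _ _ _ _ t T.+1 A0); first by rewrite ltW.
move=> N TN.
have := bsumR_smul_le_aliased g t01 (ltnW TN) (leq_trans (ltn0Sn _) TN).
by rewrite -/D; congr (_ <= _ + _); ring.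
Qed.

End MultiplierBound.

Section Truncation.
Variables (R : realType) (n : nat).
Local Notation ser := (mi n -> R[i]).

Lemma smulBr (phi g1 g2 : ser) c :
  smul phi (fun b => g1 b - g2 b) c = smul phi g1 c - smul phi g2 c.
Proof. by rewrite /smul -sumrB; apply: eq_bigr => a _; rewrite mulrBr. Qed.

Lemma smul_trunc_subE (phi f : ser) k c :
  smul phi (trunc k f) c - trunc k f c =
  \sum_(b : {ffun 'I_n -> 'I_k}) f (mi_of b) * mshift (mi_of b) (fun a => phi a - hone R a) c.
Proof.
set L := maxn k (mbound c).+1.
rewrite (smul_mshift _ _ (in_box_le (leq_maxr k _) (in_box_mbound c))).
rewrite (@sum_box_supp _ _ k L (fun d => trunc k f d * mshift d phi c)) ?leq_maxl //;
  last by move=> d /negbTE dk; rewrite /trunc dk mul0r.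
have -> : trunc k f c =
    \sum_(b : {ffun 'I_n -> 'I_k}) f (mi_of b) * mshift (mi_of b) (@hone R n) c.
  rewrite /trunc -(sum_box_delta k c f); apply: eq_bigr => b _.
  rewrite /mshift /hone -(mle_msub_eq0 (mi_of b) c).
  by case: (mle (mi_of b) c) => /=; [case: ifP; rewrite ?mulr1 ?mulr0 | rewrite mulr0].
rewrite -sumrB; apply: eq_bigr => b _; rewrite /trunc in_box_mi_of -mulrBr /mshift.
by case: ifP; rewrite ?subrr.
Qed.

Lemma cvgH2_smul_trunc_sub (theta f : ser) M : 0 <= M ->
  (forall g T, bsumR T (fun a => sqmod (smul theta g a)) <= M * bsumR T (fun a => sqmod (g a))) ->
  inH2 f ->
  cvgH2 (fun k a => smul theta (trunc k f) a - trunc k f a) (fun a => smul theta f a - f a).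
Proof.
move=> M0 smul_le f2 e e0.
have [K HK] := cvgH2_trunc f2 (ltac:(rewrite divr_gt0 //; lra) : 0 < e / (2 * M + 2)).
exists K => k Kk N; set d := fun b => trunc k f b - f b.
have -> : (fun a => sqmod (smul theta (trunc k f) a - trunc k f a - (smul theta f a - f a)))
    = fun a => sqmod (smul theta d a + - d a).
  by apply/funext => a; rewrite /d smulBr; congr sqmod; ring.
apply: le_trans (_ : _ <= bsumR N (fun a => 2 * sqmod (smul theta d a) + 2 * sqmod (d a))) _.
  by apply: ler_sum => a _; rewrite -(sqmodN (d _)); exact: sqmodD_le.
rewrite /bsumR big_split /= -!mulr_sumr.
have := smul_le d N; have := HK k Kk N; rewrite /bsumR.
set X1 := \sum_(i : {ffun 'I_n -> 'I_N}) sqmod (smul theta d (mi_of i)).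
set X2 := \sum_(i : {ffun 'I_n -> 'I_N}) sqmod (d (mi_of i)) => X2e X1M.
have : M * X2 <= M * (e / (2 * M + 2)) by exact: ler_wpM2l.
have : (2 * M + 2) * (e / (2 * M + 2)) = e by field; lra.
nra.
Qed.

End Truncation.

Section QuotientModule.
Variables (R : realType) (n : nat) (Q : set (mi n -> R[i])) (theta : mi n -> R[i]).
Hypotheses (hQ : quotient_module Q) (htheta : is_proj Q (@hone R n) theta).

Lemma perp_proj_one_sub : perp Q (fun a => theta a - hone R a).
Proof.
have [[Q_H2 _ _ _ _] _] := hQ; have [Qtheta one_theta_perp] := htheta.
have := perpZ (-1) (conj (inH2B (@inH2_one R n) (Q_H2 _ Qtheta)) one_theta_perp).
by congr perp; apply/funext => a; ring.
Qed.

Lemma perp_smul_trunc_sub f k : perp Q (fun a => smul theta (trunc k f) a - trunc k f a).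
Proof.
have := perp_sum (F := fun (b : {ffun 'I_n -> 'I_k}) a =>
  f (mi_of b) * mshift (mi_of b) (fun a => theta a - hone R a) a)
  (fun b => perpZ (f (mi_of b)) (perp_mshift hQ (mi_of b) perp_proj_one_sub)).
by congr perp; apply/funext => a; rewrite smul_trunc_subE.
Qed.

End QuotientModule.

Theorem proposition6p4 (R : realType) (n : nat) (hn : (1 <= n)%N)
  (Q : set (mi n -> R[i])) (hQ : quotient_module Q)
  (theta : mi n -> R[i]) (htheta : is_proj Q (@hone R n) theta)
  (hinf : inHinf theta) :
  forall f, Q f -> inH2 (smul theta f) /\ is_proj Q (smul theta f) f.
Proof.
move=> f Qf; have [[Q_H2 _ _ _ _] _] := hQ.
have [B thetaB] := Q_H2 _ (proj1 htheta); have [M thetaM] := hinf.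
have M0 := inHinf_bound_ge0 thetaM.
have smul_le := bsumR_smul_le (normc_coef_le thetaB) thetaM.
have [Bf fB] := Q_H2 _ Qf.
split; first by exists (M * Bf) => N; apply: le_trans (smul_le f N) _; exact: ler_wpM2l.
split => // h Qh.
apply: inner0_cvgH2 (Q_H2 _ Qh) (cvgH2_smul_trunc_sub M0 smul_le (Q_H2 _ Qf)) _ => k.
exact: (perp_smul_trunc_sub hQ htheta f k).2.
Qed.
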